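(* Let $\text{rank}[\mathbf{A}_{12}] = q$. Then the system $$\dot{\hat{\mathbf{z}}}_2(t) = [\mathbf{A}_{22} - \mathbf{L}\mathbf{A}_{12}]\hat{\mathbf{z}}_2(t) + \mathbf{L}\mathbf{y}_1(t) + \mathbf{D}\mathbf{u}_1(t) + \mathbf{F}\boldsymbol{\omega}(t), \qquad \dot{\boldsymbol{\omega}}(t) = \mathbf{G}[\mathbf{y}_1(t) - \mathbf{A}_{12}\hat{\mathbf{z}}_2(t)]$$ with $\text{rank}[\mathbf{G}] = k$ and $q \geq k$ is a reduced order proportional-integral observer for the system $\dot{\mathbf{x}}(t) = \mathbf{A}\mathbf{x}(t) + \mathbf{B}\mathbf{u}(t)$, $\mathbf{y}(t) = \mathbf{C}\mathbf{x}(t)$ if and only if the following condition holds: (a) The pair $(\mathbf{A}, \mathbf{C})$ is detectable.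
   Context: Consider the continuous-time LTI system $\dot{\mathbf{x}}(t) = \mathbf{A}\mathbf{x}(t) + \mathbf{B}\mathbf{u}(t)$, $\mathbf{y}(t) = \mathbf{C}\mathbf{x}(t)$ with real matrices $\mathbf{A}$ ($n\times n$), $\mathbf{B}$ ($n\times m$), $\mathbf{C}$ ($p\times n$), $\text{rank}[\mathbf{C}]=p$. Let $\mathbf{T}$ be a nonsingular real $n\times n$ matrix with $\mathbf{C}\mathbf{T}=[\mathbf{I}_p,\mathbf{0}]$, and write $\mathbf{T}^{-1}\mathbf{A}\mathbf{T} = \begin{bmatrix}\mathbf{A}_{11} & \mathbf{A}_{12}\\ \mathbf{A}_{21} & \mathbf{A}_{22}\end{bmatrix}$, $\mathbf{T}^{-1}\mathbf{B} = \begin{bmatrix}\mathbf{G}_1\\ \mathbf{G}_2\end{bmatrix}$, where $\mathbf{A}_{12}$ is $p\times(n-p)$ and $\mathbf{A}_{22}$ is $(n-p)\times(n-p)$; $\mathbf{z}=\mathbf{T}^{-1}\mathbf{x} = [\mathbf{z}_1;\mathbf{z}_2]$ with $\mathbf{z}_1=\mathbf{y}$ and $\mathbf{z}_2$ of size $(n-p)$. Define $\mathbf{u}_1(t)=[\mathbf{y}(t);\mathbf{u}(t)]$, $\mathbf{y}_1(t)=\dot{\mathbf{y}}(t)-\mathbf{A}_{11}\mathbf{y}(t)-\mathbf{G}_1\mathbf{u}(t)$, $\mathbf{D}=[\mathbf{A}_{21},\mathbf{G}_2]$, so that $\dot{\mathbf{z}}_2 = \mathbf{A}_{22}\mathbf{z}_2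 + \mathbf{D}\mathbf{u}_1$, $\mathbf{y}_1=\mathbf{A}_{12}\mathbf{z}_2$. In the observer, $\hat{\mathbf{z}}_2(t)$ has size $(n-p)$, $\boldsymbol{\omega}(t)$ has size $k$, and $\mathbf{L}$, $\mathbf{F}$, $\mathbf{G}$ are real matrices of size $(n-p)\times p$, $(n-p)\times k$, $k\times p$. The observer is called a reduced order proportional-integral observer if for arbitrary initial conditions and any input, $\hat{\mathbf{z}}_2(t)-\mathbf{z}_2(t)\to\mathbf{0}$ and $\boldsymbol{\omega}(t)\to\mathbf{0}$ as $t\to\infty$; equivalently, the matrix $\begin{bmatrix}\mathbf{A}_{22}-\mathbf{L}\mathbf{A}_{12} & \mathbf{F}\\ -\mathbf{G}\mathbf{A}_{12} & \mathbf{0}\end{bmatrix}$ is Hurwitz stable (all eigenvalues have negative real parts). The pair $(\mathbf{A},\mathbf{C})$ is detectable iff $\text{rank}\begin{bmatrix}\mathbf{C}\\ s\mathbf{I}_n-\mathbf{A}\end{bmatrix}=n$ for all complex $s$ with $\mathrm{Re}(s)\ge 0$. *)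

(* real matrices over an arbitrary real closed field R,
   complexified to R[i] (mathcomp-real-closed) for eigenvalues / PBH test. *)
From HB Require Import structures.
From mathcomp Require Import all_boot all_order all_algebra.
From mathcomp Require Import complex.
Set Implicit Arguments. Unset Strict Implicit. Unset Printing Implicit Defensive.
Import Order.TTheory GRing.Theory Num.Theory.
Local Open Scope ring_scope.

Definition cmx (R : rcfType) (m n : nat) (M : 'M[R]_(m, n)) : 'M[R[i]]_(m, n) :=
  map_mx (fun x : R => (x%:C)%C) M.

Definition hurwitz (R : rcfType) (n : nat) (M : 'M[R]_n) : Prop :=
  forall s : R[i], eigenvalue (cmx M) s -> complex.Re s < 0.

(* detectability of (A, C) via the rank (PBH) condition of the paper *)
Definition detectable (R : rcfType) (n p : nat) (A : 'M[R]_n) (C : 'M[R]_(p, n))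
  : Prop :=
  forall s : R[i], 0 <= complex.Re s ->
    \rank (col_mx (cmx C) (s%:M - cmx A)) = n.

(* the error-dynamics matrix of the reduced order PI observer *)
Definition pi_obs_matrix (R : rcfType) (p r k : nat)
  (A22 : 'M[R]_r) (A12 : 'M[R]_(p, r))
  (L : 'M[R]_(r, p)) (F : 'M[R]_(r, k)) (G : 'M[R]_(k, p)) : 'M[R]_(r + k) :=
  block_mx (A22 - L *m A12) F (- (G *m A12)) 0.

(* reduced order PI observer: error matrix is Hurwitz (equivalent
   characterization given in the paper's definition) *)
Definition is_reduced_PI_observer (R : rcfType) (p r k : nat)
  (A22 : 'M[R]_r) (A12 : 'M[R]_(p, r))
  (L : 'M[R]_(r, p)) (F : 'M[R]_(r, k)) (G : 'M[R]_(k, p)) : Prop :=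
  hurwitz (pi_obs_matrix A22 A12 L F G).

(* Detectability of (A, C) is equivalent, through T, to the eigenvector (PBH)
   test for the reduced pair (A22, A12).  Necessity: an eigenvector z of A22
   with A12 z = 0 and Re s >= 0 extends by zero to an eigenvector of the PI
   error matrix.  Sufficiency: the error matrix is Aa - [L; G] Ca for the
   augmented pair Aa = [A22 F; 0 0], Ca = [A12 0].  Since k <= rank A12, F can
   be chosen so that A22 a1 + F a2 = 0 and A12 a1 = 0 force a1 = a2 = 0, which
   makes (Aa, Ca) detectable; an observer gain for a detectable pair is then
   built by pole shifting, one unstable real eigenvalue or conjugate pair at a
   time, each shift being a rank-one or rank-two real feedback whose effect on
   the characteristic polynomial is given by Brauer's theorem.  Finally
   rank G = k, for otherwise 0 would be an eigenvalue of the error matrix. *)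

From HB Require Import structures.
From mathcomp Require Import all_boot all_order all_algebra.
From mathcomp Require Import complex.
From mathcomp Require Import ring lra zify.
From Stdlib Require Import Classical_Prop.
Set Implicit Arguments. Unset Strict Implicit. Unset Printing Implicit Defensive.
Import Order.TTheory GRing.Theory Num.Theory.
Local Open Scope complex_scope.
Local Open Scope ring_scope.

Lemma char_poly_trmx (F : comNzRingType) n (A : 'M[F]_n) :
  char_poly A^T = char_poly A.
Proof.
by rewrite /char_poly /char_poly_mx -det_tr linearB /= tr_scalar_mx ?map_trmx ?trmxK.
Qed.

Lemma char_poly_mx11 (F : comNzRingType) (a : F) :
  char_poly (a%:M : 'M_1) = 'X - a%:P.
Proof. by rewrite /char_poly /char_poly_mx det_mx11 !mxE /= mulr1n. Qed.

Lemma det_scalar_mx22 (F : comNzRingType) (x y z w : F) :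
  \det (block_mx x%:M y%:M z%:M w%:M : 'M_(1 + 1)) = x * w - y * z.
Proof.
rewrite (expand_det_row _ (lshift 1 0)) big_split_ord !big_ord1 /cofactor !det_mx11.
rewrite !block_mxEul !block_mxEur.
have e1 : lift (lshift 1 (0 : 'I_1)) (0 : 'I_1) = rshift 1 (0 : 'I_1) by apply: val_inj.
have e2 : lift (rshift 1 (0 : 'I_1)) (0 : 'I_1) = lshift 1 (0 : 'I_1) by apply: val_inj.
have s1 : split (rshift 1 (0 : 'I_1)) = inr 0 := unsplitK (inr 0).
have s2 : split (lshift 1 (0 : 'I_1)) = inl 0 := unsplitK (inl 0).
rewrite !mxE e1 e2 !s1 ?s2 !mxE ?s1 ?s2 ?mxE /= !mulr1n.
by rewrite add0n expr0 expr1 mul1r; ring.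
Qed.

Lemma char_poly_scalar_mx22 (F : comNzRingType) (x y z w : F) :
  char_poly (block_mx x%:M y%:M z%:M w%:M : 'M_(1 + 1))
  = 'X * 'X - (x + w)%:P * 'X + (x * w - y * z)%:P.
Proof.
rewrite /char_poly /char_poly_mx map_block_mx !map_scalar_mx (scalar_mx_block 1 1).
rewrite opp_block_mx add_block_mx -!raddfN -!raddfD /= !add0r det_scalar_mx22.
rewrite !polyCN !polyCB polyCD !polyCM; ring.
Qed.

Section FieldMatrix.
Variable F : fieldType.

Lemma eigenvalue_trmx n (A : 'M[F]_n) a : eigenvalue A^T a = eigenvalue A a.
Proof. by rewrite !eigenvalue_root_char char_poly_trmx. Qed.

(* Brauer: the rows of [W] span an [A]-invariant subspace on which [A] acts as
   [Lam], so a feedback through [W] only moves the part [Lam] of the spectrum. *)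
Lemma char_poly_brauer n d (A : 'M[F]_n) (Lam : 'M[F]_d) (W : 'M[F]_(d, n))
    (U : 'M[F]_(n, d)) :
  W *m A = Lam *m W ->
  char_poly Lam * char_poly (A - U *m W) = char_poly A * char_poly (Lam - W *m U).
Proof.
move=> WA.
pose P m l (X : 'M[F]_(m, l)) := map_mx (@polyC F) X.
set M := char_poly_mx A; set N := char_poly_mx Lam.
have eM : char_poly_mx (A - U *m W) = M + P _ _ U *m P _ _ W.
  by rewrite /M /char_poly_mx /P map_mxB map_mxM opprB addrA addrAC.
have eN : char_poly_mx (Lam - W *m U) = N + P _ _ W *m P _ _ U.
  by rewrite /N /char_poly_mx /P map_mxB map_mxM opprB addrA addrAC.
have WM : P _ _ W *m M = N *m P _ _ W.
  rewrite /M /N /char_poly_mx !mulmxBr !mulmxBl mul_mx_scalar mul_scalar_mx.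
  by rewrite /P -!map_mxM WA.
pose Y := block_mx M (- P _ _ U) (P _ _ W) 1%:M.
have E1 : Y = block_mx 1%:M (- P _ _ U) 0 1%:M *m
              block_mx (M + P _ _ U *m P _ _ W) 0 (P _ _ W) 1%:M.
  by rewrite mulmx_block !mul1mx !mul0mx !mulmx1 !add0r ?addr0 mulNmx addrK.
have E2 : block_mx 1%:M 0 (- P _ _ W) N *m Y =
          block_mx M (- P _ _ U) 0 (N + P _ _ W *m P _ _ U).
  rewrite mulmx_block !mul1mx !mul0mx !mulmx1 !addr0 mulNmx WM addNr.
  by rewrite mulNmx mulmxN opprK addrC.
have := congr1 determinant E2; rewrite det_mulmx det_lblock det_ublock det1 mul1r.
rewrite E1 det_mulmx det_ublock det_lblock !det1 !mul1r mulr1 => H.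
by rewrite /char_poly eM eN.
Qed.

Lemma row_mul_delta_mx m (x : 'rV[F]_m) j : x *m delta_mx j 0 = (x 0 j)%:M :> 'M_1.
Proof. by apply/matrixP => i k; rewrite !ord1 -colE !mxE /= mulr1n. Qed.

Lemma rowV0Pn m (x : 'rV[F]_m) : x != 0 -> exists j, x 0 j != 0.
Proof. by case/matrix0Pn => i [j]; rewrite ord1 => ?; exists j. Qed.

Lemma place_eigenvalue n m (A : 'M[F]_n) (B : 'M[F]_(n, m)) a c (y : 'rV[F]_n) :
  y *m A = a *: y -> y *m B != 0 ->
  exists K : 'M[F]_(m, n),
    ('X - a%:P) * char_poly (A - B *m K) = char_poly A * ('X - c%:P).
Proof.
move=> yA /rowV0Pn [j gj]; set g := (y *m B) 0 j in gj.
pose K' : 'M[F]_(m, 1) := ((a - c) / g) *: delta_mx j 0.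
exists (K' *m y).
have WA : y *m A = (a%:M : 'M_1) *m y by rewrite mul_scalar_mx.
rewrite mulmxA; have := char_poly_brauer (B *m K') WA; rewrite char_poly_mx11 => ->.
rewrite mulmxA /K' -scalemxAr row_mul_delta_mx -/g scale_scalar_mx -raddfB /=.
by rewrite char_poly_mx11 divfK // subKr.
Qed.

Lemma mulmx_full_col_rank_eq0 n q (P : 'M[F]_(q, n)) (x : 'cV_n) :
  \rank P = n -> P *m x = 0 -> x = 0.
Proof.
move=> rk Px; apply: trmx_inj; rewrite trmx0; apply/eqP.
have fr : row_free P^T by rewrite /row_free mxrank_tr rk.
by rewrite -(mulmx_free_eq0 _ fr) -trmx_mul Px trmx0.
Qed.

Lemma nonfull_col_rank_ker n q (P : 'M[F]_(q, n)) :
  \rank P != n -> exists2 x : 'cV_n, x != 0 & P *m x = 0.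
Proof.
move=> rk; have nfr : ~~ row_free P^T by rewrite /row_free mxrank_tr.
exists (nz_row (kermx P^T))^T; first by rewrite trmx_eq0 nz_row_eq0 kermx_eq0.
apply: trmx_inj; rewrite trmx_mul trmxK trmx0; apply/sub_kermxP.
exact: nz_row_sub.
Qed.

Lemma eigenvalue_col n (M : 'M[F]_n) a (x : 'cV_n) :
  M *m x = a *: x -> x != 0 -> eigenvalue M a.
Proof.
move=> Mx xnz; rewrite -eigenvalue_trmx; apply/eigenvalueP; exists x^T.
  by rewrite -trmx_mul Mx linearZ.
by rewrite trmx_eq0.
Qed.

End FieldMatrix.

Lemma place_eigenpair (F : realFieldType) n m (A : 'M[F]_n) (B : 'M[F]_(n, m))
    (a b tau delta : F) (u v : 'rV[F]_n) :
  b != 0 -> u *m A = a *: u - b *: v -> v *m A = b *: u + a *: v ->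
  u *m B != 0 \/ v *m B != 0 ->
  exists K : 'M[F]_(m, n),
    ('X * 'X - (a + a)%:P * 'X + (a * a + b * b)%:P) * char_poly (A - B *m K)
    = char_poly A * ('X * 'X - tau%:P * 'X + delta%:P).
Proof.
move=> b0 uA vA uvB.
have [j gj] : exists j, ((u *m B) 0 j != 0) || ((v *m B) 0 j != 0).
  by case: uvB => /rowV0Pn [j hj]; exists j; rewrite hj ?orbT.
set g1 := (u *m B) 0 j in gj; set g2 := (v *m B) 0 j in gj.
have g_nz : g1 * g1 + g2 * g2 != 0.
  by rewrite -!expr2 paddr_eq0 ?sqr_ge0 // !sqrf_eq0 negb_and.
(* [k1, k2] solve the linear system making [trace = tau] and [det = delta] for
   the 2 x 2 matrix [Lam - W U] below. *)
pose t := a + a - tau; pose c := (a * a + b * b - delta - a * t) / b.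
pose k1 := (g1 * t + g2 * c) / (g1 * g1 + g2 * g2).
pose k2 := (g2 * t - g1 * c) / (g1 * g1 + g2 * g2).
exists ((delta_mx j 0 *m row_mx k1%:M k2%:M) *m col_mx u v).
pose Lam : 'M[F]_(1 + 1) := block_mx a%:M (- b)%:M b%:M a%:M.
have WA : col_mx u v *m A = Lam *m col_mx u v.
  by rewrite mul_col_mx mul_block_col !mul_scalar_mx uA vA scaleNr.
have -> : 'X * 'X - (a + a)%:P * 'X + (a * a + b * b)%:P = char_poly Lam.
  by rewrite char_poly_scalar_mx22 mulNr opprK.
rewrite mulmxA (char_poly_brauer _ WA); congr (_ * _).
rewrite !mulmxA !mul_col_mx !row_mul_delta_mx !mul_mx_row -block_mxEv.
rewrite -!scalar_mxM -/g1 -/g2 opp_block_mx add_block_mx -!raddfN -!raddfD /=.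
rewrite char_poly_scalar_mx22; congr ('X * 'X - _%:P * 'X + _%:P).
  by rewrite /k1 /k2 /t; field.
by rewrite /k1 /k2 /c /t; field; rewrite g_nz b0.
Qed.

Lemma monic_factor_out (F : fieldType) (c c' u s q t : {poly F}) :
  c = u * s -> q * c' = c * t -> q \is monic -> (1 < size q)%N -> q %| u ->
  u != 0 -> exists2 u' : {poly F}, c' = u' * (s * t) & (size u' < size u)%N.
Proof.
move=> -> qc' qm qs /dvdpP [u' eu] unz; exists u'.
  by apply: (mulfI (monic_neq0 qm)); rewrite qc' eu; ring.
have u'nz : u' != 0 by apply: contraNneq unz => u'0; rewrite eu u'0 mul0r.
by rewrite eu size_Mmonic //; move: (size u') (size q) qs => i j; lia.
Qed.

Section Complexification.
Variable R : rcfType.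
Local Notation toC := (real_complex R).

Lemma cmxE m n (M : 'M[R]_(m, n)) : cmx M = map_mx toC M.
Proof. by []. Qed.

Lemma cmxM m n l (A : 'M[R]_(m, n)) (B : 'M[R]_(n, l)) :
  cmx (A *m B) = cmx A *m cmx B.
Proof. by rewrite !cmxE map_mxM. Qed.

Lemma cmxV n (T : 'M[R]_n) : cmx (invmx T) = invmx (cmx T).
Proof. by rewrite !cmxE map_invmx. Qed.

Lemma cmx_tr m n (M : 'M[R]_(m, n)) : cmx M^T = (cmx M)^T.
Proof. by rewrite !cmxE map_trmx. Qed.

Lemma cmx_eq0 m n (P : 'M[R]_(m, n)) : cmx P = 0 -> P = 0.
Proof. by move=> /eqP; rewrite cmxE map_mx_eq0 => /eqP. Qed.

Lemma cmx_block_mul_col p r (M : 'M[R]_(p + r)) (z1 : 'cV[R[i]]_p) (z2 : 'cV_r) :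
  cmx M *m col_mx z1 z2 =
  col_mx (cmx (ulsubmx M) *m z1 + cmx (ursubmx M) *m z2)
         (cmx (dlsubmx M) *m z1 + cmx (drsubmx M) *m z2).
Proof. by rewrite -{1}[M]submxK cmxE map_block_mx mul_block_col. Qed.

Definition cplx_mx m n (P Q : 'M[R]_(m, n)) : 'M[R[i]]_(m, n) := cmx P + 'i *: cmx Q.

Lemma cplx_mxE m n (P Q : 'M[R]_(m, n)) i j :
  cplx_mx P Q i j = (P i j)%:C + 'i * (Q i j)%:C.
Proof. by rewrite !mxE. Qed.

Lemma cplx_mx_ReIm m n (X : 'M[R[i]]_(m, n)) :
  X = cplx_mx (map_mx (@complex.Re R) X) (map_mx (@complex.Im R) X).
Proof. by apply/matrixP => i j; rewrite cplx_mxE !mxE -complexE. Qed.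

Lemma cplx_mx_inj m n (P Q P' Q' : 'M[R]_(m, n)) :
  cplx_mx P Q = cplx_mx P' Q' -> P = P' /\ Q = Q'.
Proof.
move=> /matrixP E; split; apply/matrixP => i j; have := E i j; rewrite !cplx_mxE.
  by move=> /(congr1 (@complex.Re R)) /=; simpc.
by move=> /(congr1 (@complex.Im R)) /=; simpc.
Qed.

Lemma cplx_mx0 m n : cplx_mx (0 : 'M[R]_(m, n)) 0 = 0.
Proof. by rewrite /cplx_mx !cmxE !map_mx0 scaler0 addr0. Qed.

Lemma cplx_mx_eq0 m n (P Q : 'M[R]_(m, n)) : cplx_mx P Q = 0 -> P = 0 /\ Q = 0.
Proof. by rewrite -cplx_mx0 => /cplx_mx_inj. Qed.

Lemma cplx_mxD m n (P Q P' Q' : 'M[R]_(m, n)) :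
  cplx_mx P Q + cplx_mx P' Q' = cplx_mx (P + P') (Q + Q').
Proof. by rewrite /cplx_mx !cmxE !map_mxD scalerDr addrACA. Qed.

Lemma cplx_mxMl m n l (Y : 'M[R]_(m, n)) (P Q : 'M[R]_(n, l)) :
  cmx Y *m cplx_mx P Q = cplx_mx (Y *m P) (Y *m Q).
Proof. by rewrite /cplx_mx mulmxDr -scalemxAr !cmxM. Qed.

Lemma cplx_mxMr m n l (P Q : 'M[R]_(m, n)) (Y : 'M[R]_(n, l)) :
  cplx_mx P Q *m cmx Y = cplx_mx (P *m Y) (Q *m Y).
Proof. by rewrite /cplx_mx mulmxDl -scalemxAl !cmxM. Qed.

Lemma cplx_mxZ m n (a b : R) (P Q : 'M[R]_(m, n)) :
  (a%:C + 'i * b%:C) *: cplx_mx P Q = cplx_mx (a *: P - b *: Q) (b *: P + a *: Q).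
Proof.
apply/matrixP => i j; rewrite mxE !cplx_mxE !mxE.
by apply/eqP; rewrite eq_complex /=; simpc; rewrite [X in X == _]addrC eqxx.
Qed.

End Complexification.

Section Stabilization.
Variable R : rcfType.
Local Notation toC := (real_complex R).

Definition stable_poly (q : {poly R[i]}) := forall z, root q z -> complex.Re z < 0.

Lemma stable_polyM p q : stable_poly p -> stable_poly q -> stable_poly (p * q).
Proof. by move=> hp hq z; rewrite rootM => /orP [/hp|/hq]. Qed.

Lemma stable_poly_XaddC1 : stable_poly ('X + 1).
Proof.
move=> z; rewrite -[1]opprK -polyC1 -polyCN root_XsubC => /eqP ->.
by rewrite /= ltrN10.
Qed.

Lemma stable_poly1 : stable_poly 1.
Proof. by move=> z; rewrite (negbTE (root1 z)). Qed.

Lemma stable_poly_factor_root (u s : {poly R[i]}) z :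
  stable_poly s -> root (u * s) z -> 0 <= complex.Re z -> root u z.
Proof. by move=> hs; rewrite rootM => /orP [// | /hs]; rewrite ltNge => /negbTE ->. Qed.

Lemma char_poly_cmx n (A : 'M[R]_n) : char_poly (cmx A) = map_poly toC (char_poly A).
Proof. by rewrite cmxE map_char_poly. Qed.

Definition pbh_stabilizable n m (A : 'M[R]_n) (B : 'M[R]_(n, m)) :=
  forall (s : R[i]) (w : 'rV[R[i]]_n),
    0 <= complex.Re s -> w *m cmx A = s *: w -> w *m cmx B = 0 -> w = 0.

Definition pbh_detectable n p (A : 'M[R]_n) (C : 'M[R]_(p, n)) :=
  forall (s : R[i]) (x : 'cV[R[i]]_n),
    0 <= complex.Re s -> cmx A *m x = s *: x -> cmx C *m x = 0 -> x = 0.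

Lemma pbh_stabilizable_feedback n m (A : 'M[R]_n) (B : 'M[R]_(n, m)) K :
  pbh_stabilizable A B -> pbh_stabilizable (A - B *m K) B.
Proof.
move=> H s w hs wA wB; apply: (H s w hs) => //.
by move: wA; rewrite cmxE map_mxB map_mxM mulmxBr mulmxA -cmxE wB mul0mx subr0.
Qed.

Lemma pbh_unstable_left_eigvec n m (A : 'M[R]_n) (B : 'M[R]_(n, m)) (a b : R)
    (w : 'rV[R[i]]_n) :
  pbh_stabilizable A B -> 0 <= a ->
  w *m cmx A = (a%:C + 'i * b%:C) *: w -> w != 0 ->
  exists u v : 'rV[R]_n, [/\ u *m A = a *: u - b *: v, v *m A = b *: u + a *: v
                           & u *m B != 0 \/ v *m B != 0].
Proof.
move=> H ha wA wnz.
set u := map_mx (@complex.Re R) w; set v := map_mx (@complex.Im R) w.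
have ew : w = cplx_mx u v := cplx_mx_ReIm w.
move: (wA); rewrite ew cplx_mxMr cplx_mxZ => /cplx_mx_inj [uA vA].
exists u, v; split => //.
case: (eqVneq (u *m B) 0) => [uB|]; last by left.
case: (eqVneq (v *m B) 0) => [vB|]; last by right.
case/negP: wnz; apply/eqP; apply: (H _ w _ wA); first by rewrite /=; simpc.
by rewrite ew cplx_mxMr uB vB cplx_mx0.
Qed.

Lemma feedback_move_real_eigenvalue n m (A : 'M[R]_n) (B : 'M[R]_(n, m)) (a : R)
    (w : 'rV[R[i]]_n) :
  pbh_stabilizable A B -> 0 <= a -> w *m cmx A = a%:C *: w -> w != 0 ->
  exists K, ('X - (a%:C)%:P) * char_poly (cmx (A - B *m K))
            = char_poly (cmx A) * ('X + 1).
Proof.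
move=> H ha wA wnz.
have wA' : w *m cmx A = (a%:C + 'i * 0%:C) *: w by rewrite mulr0 addr0.
have [u [v [uA vA uvB]]] := pbh_unstable_left_eigvec H ha wA' wnz.
have [y [yA yB]] : exists y : 'rV[R]_n, y *m A = a *: y /\ y *m B != 0.
  by case: uvB => ?; [exists u; rewrite uA | exists v; rewrite vA];
     rewrite scale0r ?subr0 ?add0r.
have [K EK] := place_eigenvalue (-1) yA yB; exists K.
move: EK => /(congr1 (map_poly toC)); rewrite !rmorphM /= -!char_poly_cmx.
by rewrite !map_polyXsubC /= rmorphN rmorph1 polyCN polyC1 opprK.
Qed.

Lemma conj_pair_quadratic (a b : R) :
  ('X - (a%:C + 'i * b%:C)%:P) * ('X - ((a%:C + 'i * b%:C)^*)%:P)
  = map_poly toC ('X * 'X - (a + a)%:P * 'X + (a * a + b * b)%:P).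
Proof.
have -> : (a%:C + 'i * b%:C)^* = a%:C - 'i * b%:C.
  by apply/eqP; rewrite eq_complex /=; simpc.
have ii : ('i%:P * 'i%:P : {poly R[i]}) = -1.
  by rewrite -polyCM -expr2 sqr_i polyCN polyC1.
rewrite [in X in _ = X]rmorphD [in X in _ = X]rmorphB [in X in _ = X]rmorphM /=.
rewrite !rmorphD !rmorphM /= map_polyX !map_polyC /= polyCN polyCM rmorphD /=.
rewrite !map_polyC.
transitivity ('X * 'X - ((a%:C)%:P + (a%:C)%:P) * 'X + (a%:C)%:P * (a%:C)%:P
   - ('i%:P * 'i%:P) * ((b%:C)%:P * (b%:C)%:P) : {poly R[i]}); first by ring.
by rewrite ii; ring.
Qed.

Lemma feedback_move_eigenpair n m (A : 'M[R]_n) (B : 'M[R]_(n, m)) (a b : R)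
    (w : 'rV[R[i]]_n) :
  pbh_stabilizable A B -> 0 <= a -> b != 0 ->
  w *m cmx A = (a%:C + 'i * b%:C) *: w -> w != 0 ->
  exists K, ('X - (a%:C + 'i * b%:C)%:P) * ('X - ((a%:C + 'i * b%:C)^*)%:P)
              * char_poly (cmx (A - B *m K)) = char_poly (cmx A) * ('X + 1) ^+ 2.
Proof.
move=> H ha b0 wA wnz.
have [u [v [uA vA uvB]]] := pbh_unstable_left_eigvec H ha wA wnz.
have [K EK] := place_eigenpair (-2) 1 b0 uA vA uvB; exists K.
have -> : ('X + 1) ^+ 2 = map_poly toC ('X * 'X - (-2)%:P * 'X + 1%:P).
  rewrite rmorphD rmorphB !rmorphM /= map_polyX !map_polyC /= rmorphN rmorph1.
  by rewrite rmorph_nat polyCN polyC_natr; ring.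
move: EK => /(congr1 (map_poly toC)); rewrite !rmorphM /= -!char_poly_cmx => <-.
by rewrite conj_pair_quadratic.
Qed.

Lemma root_char_poly_cmx_conj n (A : 'M[R]_n) z :
  root (char_poly (cmx A)) z -> root (char_poly (cmx A)) z^*.
Proof.
rewrite -complex_root_conj char_poly_cmx -map_poly_comp.
rewrite (eq_map_poly (g := toC)) // => x /=.
by apply/eqP; rewrite eq_complex /= oppr0 !eqxx.
Qed.

Lemma conjc_neq (z : R[i]) : complex.Im z != 0 -> z^* != z.
Proof.
by case: z => a b /=; apply: contra_neq => /(congr1 (@complex.Im R)) /=; lra.
Qed.

Lemma conjc_Re (z : R[i]) : complex.Re z^* = complex.Re z.
Proof. by case: z. Qed.

Lemma shift_unstable_eigenvalue n m (A : 'M[R]_n) (B : 'M[R]_(n, m)) lam u s :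
  pbh_stabilizable A B -> eigenvalue (cmx A) lam -> 0 <= complex.Re lam ->
  char_poly (cmx A) = u * s -> stable_poly s ->
  exists K u' s', [/\ char_poly (cmx (A - B *m K)) = u' * s', stable_poly s'
                    & (size u' < size u)%N].
Proof.
move=> H eig hre Ech hs.
have unz : u != 0.
  by apply: contraTneq (monic_neq0 (char_poly_monic (cmx A))) => u0; rewrite Ech u0 mul0r eqxx.
have root_u z : eigenvalue (cmx A) z -> 0 <= complex.Re z -> root u z.
  by rewrite eigenvalue_root_char Ech; apply: stable_poly_factor_root.
case/eigenvalueP: (eig) => w; rewrite [lam]complexE => wA wnz.
case: (eqVneq (complex.Im lam) 0) => [b0 | b_nz].
  have lamE : lam = (complex.Re lam)%:C by rewrite [LHS]complexE b0 mulr0 addr0.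
  move: wA; rewrite b0 mulr0 addr0 => wA.
  have [K EK] := feedback_move_real_eigenvalue H hre wA wnz.
  have dvd_u : 'X - (complex.Re lam)%:C%:P %| u.
    by rewrite -root_factor_theorem -lamE root_u.
  have [u' Ec' su'] :=
    monic_factor_out Ech EK (monicXsubC _) (eq_leq (esym (size_XsubC _))) dvd_u unz.
  exists K, u', (s * ('X + 1)); split => //.
  exact: stable_polyM hs stable_poly_XaddC1.
have [K EK] := feedback_move_eigenpair H hre b_nz wA wnz.
rewrite -complexE in EK.
have conj_neq : lam^* != lam by exact: conjc_neq.
have root_conj : eigenvalue (cmx A) lam^*.
  by rewrite eigenvalue_root_char root_char_poly_cmx_conj // -eigenvalue_root_char.
have dvd_u : ('X - lam%:P) * ('X - lam^*%:P) %| u.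
  have := @uniq_roots_dvdp _ u [:: lam; lam^*].
  rewrite big_cons big_seq1 uniq_rootsE /= inE eq_sym conj_neq /= !andbT; apply=> //.
  by rewrite !root_u // conjc_Re.
have size_q : (1 < size (('X - lam%:P) * ('X - lam^*%:P))%R)%N.
  by rewrite size_Mmonic ?monicXsubC ?polyXsubC_eq0 // !size_XsubC.
have [u' Ec' su'] :=
  monic_factor_out Ech EK (rpredM (monicXsubC _) (monicXsubC _)) size_q dvd_u unz.
exists K, u', (s * ('X + 1) ^+ 2); split => //; rewrite expr2.
exact: stable_polyM hs (stable_polyM stable_poly_XaddC1 stable_poly_XaddC1).
Qed.

Lemma pbh_stabilizable_hurwitz n m (A : 'M[R]_n) (B : 'M[R]_(n, m)) :
  pbh_stabilizable A B -> exists K, hurwitz (A - B *m K).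
Proof.
move=> H; suff: forall N (A' : 'M[R]_n) u s, pbh_stabilizable A' B ->
    char_poly (cmx A') = u * s -> stable_poly s -> (size u <= N)%N ->
    exists K, hurwitz (A' - B *m K).
  by move=> /(_ _ A _ 1 H); apply; rewrite ?mulr1 //; exact: stable_poly1.
elim=> [|N IH] A' u s HA' Ech hs.
  rewrite leqn0 size_poly_eq0 => /eqP u0.
  by move: (monic_neq0 (char_poly_monic (cmx A'))); rewrite Ech u0 mul0r eqxx.
move=> size_u.
case: (classic (exists lam, eigenvalue (cmx A') lam /\ 0 <= complex.Re lam)).
  case=> lam [eig hre].
  have [K1 [u' [s' [E1 hs' size_u']]]] := shift_unstable_eigenvalue HA' eig hre Ech hs.
  have [K2 HK2] := IH _ _ _ (pbh_stabilizable_feedback (K:=K1) HA') E1 hs'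
                      (leq_trans size_u' size_u).
  by exists (K1 + K2); rewrite mulmxDr opprD addrA.
move=> no_unstable; exists 0; rewrite mulmx0 subr0 => z ez.
by rewrite ltNge; apply/negP => hz; apply: no_unstable; exists z.
Qed.

Lemma hurwitz_trmx n (M : 'M[R]_n) : hurwitz M^T -> hurwitz M.
Proof. by move=> H s e; apply: H; rewrite cmx_tr eigenvalue_trmx. Qed.

Lemma pbh_detectable_trmx n p (A : 'M[R]_n) (C : 'M[R]_(p, n)) :
  pbh_detectable A C -> pbh_stabilizable A^T C^T.
Proof.
move=> H s w hs wA wC; apply: trmx_inj; rewrite trmx0; apply: (H s) => //.
  by rewrite -[cmx A]trmxK -cmx_tr -trmx_mul wA linearZ.
by rewrite -[cmx C]trmxK -cmx_tr -trmx_mul wC trmx0.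
Qed.

Lemma pbh_detectable_hurwitz n p (A : 'M[R]_n) (C : 'M[R]_(p, n)) :
  pbh_detectable A C -> exists L : 'M[R]_(n, p), hurwitz (A - L *m C).
Proof.
move=> /pbh_detectable_trmx /pbh_stabilizable_hurwitz [K HK]; exists K^T.
by apply: hurwitz_trmx; rewrite linearB /= trmx_mul trmxK.
Qed.

End Stabilization.

Section ReducedObserver.
Variable R : rcfType.

Lemma detectable_reducedP p r (A : 'M[R]_(p + r)) (C : 'M[R]_(p, p + r)) T :
  T \in unitmx -> C *m T = row_mx 1%:M 0 ->
  let M := invmx T *m A *m T in
  detectable A C <-> pbh_detectable (drsubmx M) (ursubmx M).
Proof.
move=> Tu CT M.
have cTu : cmx T \in unitmx by rewrite cmxE map_unitmx.
have cTM : cmx T *m cmx M = cmx A *m cmx T.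
  by rewrite /M !cmxM cmxV !mulmxA mulmxV // mul1mx.
have cCT : cmx C *m cmx T = row_mx 1%:M 0.
  by rewrite -cmxM CT cmxE map_row_mx map_mx1 map_mx0.
have eigen_lift s (z : 'cV_r) : cmx (ursubmx M) *m z = 0 ->
    cmx (drsubmx M) *m z = s *: z -> cmx M *m col_mx 0 z = s *: col_mx 0 z.
  move=> A12z A22z; rewrite cmx_block_mul_col !mulmx0 !add0r A12z A22z.
  by rewrite scale_col_mx scaler0.
split=> [det s z hs A22z A12z | H s hs].
  pose x := cmx T *m col_mx 0 z.
  have Ax : cmx A *m x = s *: x.
    by rewrite /x mulmxA -cTM -mulmxA (eigen_lift s) // scalemxAr.
  have Cx : cmx C *m x = 0 by rewrite /x mulmxA cCT mul_row_col mul0mx mulmx0 addr0.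
  have x0 : x = 0.
    apply: (mulmx_full_col_rank_eq0 (det s hs)).
    by rewrite mul_col_mx Cx mulmxBl mul_scalar_mx Ax subrr col_mx0.
  move: x0 => /(congr1 (mulmx (invmx (cmx T)))); rewrite /x mulKmx // mulmx0.
  by move/eqP; rewrite col_mx_eq0 => /andP [_ /eqP].
apply/eqP; apply: contraT => /nonfull_col_rank_ker [x xnz].
rewrite mul_col_mx => /eqP; rewrite col_mx_eq0 => /andP [/eqP Cx].
rewrite mulmxBl mul_scalar_mx subr_eq0 => /eqP Ax.
pose z := invmx (cmx T) *m x.
have xz : x = cmx T *m z by rewrite /z mulKVmx.
have Mz : cmx M *m z = s *: z.
  by rewrite /M !cmxM cmxV -!mulmxA -xz -Ax scalemxAr.
have uz : usubmx z = 0.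
  move: Cx; rewrite xz mulmxA cCT -{1}[z]vsubmxK mul_row_col mul1mx mul0mx.
  by rewrite addr0.
have ez : z = col_mx 0 (dsubmx z) by rewrite -{1}[z]vsubmxK uz.
move: Mz; rewrite ez cmx_block_mul_col !mulmx0 !add0r scale_col_mx scaler0.
case/eq_col_mx => A12z A22z.
by rewrite xz ez (H s (dsubmx z) hs A22z A12z) col_mx0 mulmx0 eqxx in xnz.
Qed.

Lemma pi_obs_matrix_eigvec p r k (A22 : 'M[R]_r) (A12 : 'M[R]_(p, r)) L F G
    (z : 'cV[R[i]]_r) s :
  cmx A12 *m z = 0 -> cmx A22 *m z = s *: z ->
  cmx (pi_obs_matrix A22 A12 L F G : 'M_(r + k)) *m col_mx z 0 = s *: col_mx z 0.
Proof.
move=> A12z A22z.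
rewrite /pi_obs_matrix cmxE map_block_mx mul_block_col !map_mx0 !mulmx0 !addr0.
rewrite map_mxB map_mxN !map_mxM -!cmxE mulmxBl mulNmx -!mulmxA A12z A22z.
by rewrite !mulmx0 !oppr0 addr0 scale_col_mx scaler0.
Qed.

Lemma pi_observer_pbh_detectable p r k (A22 : 'M[R]_r) (A12 : 'M[R]_(p, r))
    L F (G : 'M[R]_(k, p)) :
  is_reduced_PI_observer A22 A12 L F G -> pbh_detectable A22 A12.
Proof.
move=> Hur s z hs A22z A12z; apply/eqP; apply: contraT => znz.
have /Hur : eigenvalue (cmx (pi_obs_matrix A22 A12 L F G)) s.
  apply: eigenvalue_col (pi_obs_matrix_eigvec L F G A12z A22z) _.
  by rewrite col_mx_eq0 negb_and znz.
by rewrite ltNge hs.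
Qed.

Lemma pi_observer_rank_gain p r k (A22 : 'M[R]_r) (A12 : 'M[R]_(p, r))
    L F (G : 'M[R]_(k, p)) :
  is_reduced_PI_observer A22 A12 L F G -> \rank G = k.
Proof.
move=> Hur; apply/eqP; apply: contraT => nfree.
pose y := nz_row (kermx G).
have ynz : y != 0 by rewrite nz_row_eq0 kermx_eq0.
have yG : y *m G = 0 by apply/sub_kermxP; exact: nz_row_sub.
have : eigenvalue (pi_obs_matrix A22 A12 L F G) 0.
  apply/eigenvalueP; exists (row_mx 0 y).
    rewrite /pi_obs_matrix mul_row_block !mul0mx !mulmx0 !add0r mulmxN mulmxA yG.
    by rewrite mul0mx oppr0 row_mx0 scale0r.
  by rewrite -row_mx0; apply: contra_neq ynz => /eq_row_mx [].
rewrite -(eigenvalue_map (real_complex R)) rmorph0 => /Hur.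
by rewrite ltxx.
Qed.

Lemma integral_gain_exists r p k (A22 : 'M[R]_r) (A12 : 'M[R]_(p, r)) :
  (k <= \rank A12)%N -> pbh_detectable A22 A12 ->
  exists F : 'M[R]_(r, k), forall (a1 : 'cV[R]_r) (a2 : 'cV[R]_k),
    A12 *m a1 = 0 -> A22 *m a1 + F *m a2 = 0 -> a1 = 0 /\ a2 = 0.
Proof.
move=> hk H.
have ker_inj (y : 'cV[R]_r) : A12 *m y = 0 -> A22 *m y = 0 -> y = 0.
  move=> A12y A22y; apply: cmx_eq0; apply: (H 0) => //.
    by rewrite -cmxM A22y scale0r cmxE map_mx0.
  by rewrite -cmxM A12y cmxE map_mx0.
(* The rows of [F^T] span a complement of [A22 (ker A12)] (transposed), which
   has dimension at least [r - (r - rank A12) >= k]. *)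
pose W := kermx A12^T *m A22^T.
have rk_compl : (k <= \rank (W^C)%MS)%N.
  rewrite mxrank_compl.
  have : (\rank W <= r - \rank A12)%N.
    by rewrite -(mxrank_tr A12) -mxrank_ker mxrankM_maxl.
  by move: (rank_leq_col A12); lia.
pose FT : 'M[R]_(k, r) := pid_mx k *m row_base (W^C)%MS.
have FT_free : row_free FT.
  by rewrite /row_free /FT mxrankMfree ?row_base_free // rank_pid_mx.
have FT_compl : (FT <= W^C)%MS.
  by rewrite /FT (submx_trans (submxMl _ _)) // eq_row_base.
exists FT^T => a1 a2 A12a1 eq0.
have a2FT : a2^T *m FT = 0.
  apply/eqP; rewrite -submx0 -(capmx_compl W) sub_capmx.
  rewrite (submx_trans (submxMl _ _) FT_compl) andbT.
  have -> : a2^T *m FT = - (a1^T *m A22^T).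
    apply/eqP; rewrite -addr_eq0 addrC -[FT]trmxK -!trmx_mul -linearD /=.
    by rewrite eq0 trmx0.
  rewrite eqmx_opp /W submxMr //; apply/sub_kermxP.
  by rewrite -trmx_mul A12a1 trmx0.
have a20 : a2 = 0.
  by apply: trmx_inj; apply/eqP; rewrite trmx0 -(mulmx_free_eq0 _ FT_free) a2FT.
split => //; apply: ker_inj => //.
by move: eq0; rewrite a20 mulmx0 addr0.
Qed.

Lemma pbh_detectable_augment r p k (A22 : 'M[R]_r) (A12 : 'M[R]_(p, r))
    (F : 'M[R]_(r, k)) :
  pbh_detectable A22 A12 ->
  (forall (a1 : 'cV[R]_r) (a2 : 'cV[R]_k),
     A12 *m a1 = 0 -> A22 *m a1 + F *m a2 = 0 -> a1 = 0 /\ a2 = 0) ->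
  pbh_detectable (block_mx A22 F 0 0 : 'M_(r + k)) (row_mx A12 (0 : 'M_(p, k))).
Proof.
move=> H HF s x hs Ax Cx.
rewrite -[x]vsubmxK in Ax Cx *.
set x1 := usubmx x in Ax Cx *; set x2 := dsubmx x in Ax Cx *.
move: Cx; rewrite cmxE map_row_mx map_mx0 mul_row_col mul0mx addr0 -cmxE => A12x1.
move: Ax; rewrite cmxE map_block_mx !map_mx0 mul_block_col !mul0mx addr0 -!cmxE.
rewrite scale_col_mx => /eq_col_mx [e1 /esym/eqP].
have [s0 _ | s_nz] := eqVneq s 0.
  (* the hypothesis on [F] is real: apply it to real and imaginary parts *)
  move: e1 A12x1; rewrite s0 scale0r (cplx_mx_ReIm x1) (cplx_mx_ReIm x2).
  rewrite !cplx_mxMl cplx_mxD => /cplx_mx_eq0 [eqRe eqIm] /cplx_mx_eq0 [A12Re A12Im].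
  have [-> ->] := HF _ _ A12Re eqRe; have [-> ->] := HF _ _ A12Im eqIm.
  by rewrite !cplx_mx0 col_mx0.
rewrite scalemx_eq0 (negbTE s_nz) => /eqP x20.
move: e1; rewrite x20 mulmx0 addr0 => e1.
by rewrite (H s x1 hs e1 A12x1) col_mx0.
Qed.

Lemma pi_obs_matrix_output_injection r p k (A22 : 'M[R]_r) (A12 : 'M[R]_(p, r))
    (F : 'M[R]_(r, k)) (Lb : 'M[R]_(r + k, p)) :
  pi_obs_matrix A22 A12 (usubmx Lb) F (dsubmx Lb) =
  block_mx A22 F 0 0 - Lb *m row_mx A12 0.
Proof.
rewrite -{3}[Lb]vsubmxK mul_col_row !mulmx0 /pi_obs_matrix opp_block_mx add_block_mx.
by rewrite !oppr0 !addr0 !add0r.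
Qed.

Lemma reduced_PI_observerP p r k (A22 : 'M[R]_r) (A12 : 'M[R]_(p, r)) :
  (k <= \rank A12)%N ->
  (exists (L : 'M[R]_(r, p)) (F : 'M[R]_(r, k)) (G : 'M[R]_(k, p)),
      \rank G = k /\ is_reduced_PI_observer A22 A12 L F G)
  <-> pbh_detectable A22 A12.
Proof.
move=> hk; split=> [[L [F [G [_ /pi_observer_pbh_detectable]]]] // | H].
have [F HF] := integral_gain_exists hk H.
have [Lb HLb] := pbh_detectable_hurwitz (pbh_detectable_augment H HF).
have obs : is_reduced_PI_observer A22 A12 (usubmx Lb) F (dsubmx Lb).
  by rewrite /is_reduced_PI_observer pi_obs_matrix_output_injection.
by exists (usubmx Lb), F, (dsubmx Lb); split => //; apply: pi_observer_rank_gain obs.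
Qed.

End ReducedObserver.

Unset Implicit Arguments.

Theorem theorem2 (R : rcfType) (p r m k : nat)
  (A : 'M[R]_(p + r)) (B : 'M[R]_(p + r, m)) (C : 'M[R]_(p, p + r))
  (T : 'M[R]_(p + r)) :
  \rank C = p ->
  T \in unitmx ->
  C *m T = row_mx 1%:M 0 ->
  let M := invmx T *m A *m T in
  let A12 := ursubmx M in
  let A22 := drsubmx M in
  (k <= \rank A12)%N ->
  (exists (L : 'M[R]_(r, p)) (F : 'M[R]_(r, k)) (G : 'M[R]_(k, p)),
      \rank G = k /\ is_reduced_PI_observer A22 A12 L F G)
  <-> detectable A C.
Proof.
move=> _ Tu CT M A12 A22 hk.
exact: iff_trans (reduced_PI_observerP A22 hk) (iff_sym (detectable_reducedP A Tu CT)).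
Qed.
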